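(* Let $F$ be a complete nonarchimedean field with ring of integers $\mathbf{o}_F$ and maximal ideal $m_F$, and let $A$ be an $n\times n$ matrix over $F$. Let $\lambda_1,\dots,\lambda_n$ be the eigenvalues of $A$, ordered so that $|\lambda_1|\ge\dots\ge|\lambda_n|$, and let $\sigma_1\ge\dots\ge\sigma_n$ be the singular values of $A$. Suppose that for some $i\in\{1,\dots,n-1\}$ we have \[ |\lambda_i|>|\lambda_{i+1}| \quad\text{and}\quad \sigma_1\cdots\sigma_i=|\lambda_1\cdots\lambda_i|. \] Suppose $U,V\in GL_n(\mathbf{o}_F)$ are congruent to the identity matrix modulo $m_F$. Then the product of the $i$ eigenvalues of $UAV$ of largest norm has norm $|\lambda_1\cdots\lambda_i|$.
   Context: The eigenvalues of a matrix over $F$ are taken in an algebraic extension of $F$, equipped with the unique extension of the norm. The singular values $\sigma_1\ge\dots\ge\sigma_n$ of an $n\times n$ matrix $M$ over $F$ are defined by $\sigma_j=e^{-s_j}$, where $s_1,\dots,s_n$ is the sequence such that, for each $k=1,\dots,n$, $s_1+\dots+s_k$ is the minimum valuation $-\log|\cdot|$ of a $k\times k$ minor of $M$; equivalently $\sigma_1\cdots\sigma_k$ is the maximum norm of a $k\times k$ minor of $M$. *)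

From HB Require Import structures.
From mathcomp Require Import all_boot all_order all_algebra.
From mathcomp Require Import reals.
Set Implicit Arguments. Unset Strict Implicit. Unset Printing Implicit Defensive.
Import Order.TTheory GRing.Theory Num.Theory.
Local Open Scope ring_scope.

(* Setting: L is an algebraically closed field carrying a nonarchimedean
   absolute value v : L -> R; F is a subfield of L, complete for v.
   The algebraic closure of F inside L (where eigenvalues live) then carries
   the unique extension of the absolute value of F. *)

Definition nonarch_abs (R : realType) (L : fieldType) (v : L -> R) : Prop :=
  [/\ forall x, 0 <= v x,
      forall x, v x = 0 <-> x = 0,
      forall x y, v (x * y) = v x * v y &
      forall x y, v (x + y) <= Num.max (v x) (v y)].

Definition is_subfield (L : fieldType) (F : {pred L}) : Prop :=
  [/\ 0 \in F, 1 \in F,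
      forall x y, x \in F -> y \in F -> x - y \in F,
      forall x y, x \in F -> y \in F -> x * y \in F &
      forall x, x \in F -> x^-1 \in F].

Definition complete_for (R : realType) (L : fieldType) (v : L -> R)
  (F : {pred L}) : Prop :=
  forall u : nat -> L, (forall k, u k \in F) ->
    (forall e : R, 0 < e -> exists N, forall m k, (N <= m)%N -> (N <= k)%N ->
        v (u m - u k) < e) ->
    exists2 l, l \in F &
      forall e : R, 0 < e -> exists N, forall m, (N <= m)%N -> v (u m - l) < e.

Definition int_ring (R : realType) (L : fieldType) (v : L -> R) (F : {pred L})
  : {pred L} := [pred x | (x \in F) && (v x <= 1)].
Definition max_ideal (R : realType) (L : fieldType) (v : L -> R) (F : {pred L})
  : {pred L} := [pred x | (x \in F) && (v x < 1)].

Definition mx_over_pred (L : fieldType) (n : nat) (P : {pred L})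
  (A : 'M[L]_n) : Prop := forall i j, A i j \in P.

Definition in_GL_int (R : realType) (L : fieldType) (v : L -> R)
  (F : {pred L}) (n : nat) (U : 'M[L]_n) : Prop :=
  mx_over_pred (int_ring v F) U /\ v (\det U) = 1.

Definition cong_id_mod_m (R : realType) (L : fieldType) (v : L -> R)
  (F : {pred L}) (n : nat) (U : 'M[L]_n) : Prop :=
  forall i j, U i j - (i == j)%:R \in max_ideal v F.

Definition sorted_eigenvalues (R : realType) (L : fieldType) (v : L -> R)
  (n : nat) (A : 'M[L]_n) (s : seq L) : Prop :=
  char_poly A = \prod_(x <- s) ('X - x%:P) /\ sorted (fun x y => v y <= v x) s.

(* sigma_1 * ... * sigma_k : the maximum norm of a k x k minor of A *)
Definition sv_prod (R : realType) (L : fieldType) (v : L -> R)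
  (n : nat) (A : 'M[L]_n) (k : nat) : R :=
  \big[Num.max/0]_(f : {ffun 'I_k -> 'I_n})
    \big[Num.max/0]_(g : {ffun 'I_k -> 'I_n}) v (\det (mxsub f g A)).

From HB Require Import structures.
From mathcomp Require Import all_boot all_order all_algebra.
From mathcomp Require Import reals.
From mathcomp Require Import fingroup perm.
From mathcomp Require Import zify ring.
Import Order.TTheory GRing.Theory Num.Theory.
Set Implicit Arguments. Unset Strict Implicit. Unset Printing Implicit Defensive.
Local Open Scope ring_scope.

(* Write B = U A V and S = |lambda_1 ... lambda_i|.
   Upper bound: over an ultrametric field the product of any k eigenvalues of a matrix is
   bounded by its largest k x k minor, by deflating one eigenvalue at a time: conjugating by
   an integral matrix of unit determinant whose last row is a normalised left eigenvector
   splits off that eigenvalue.  By Cauchy-Binet, multiplying by integral matrices does not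
   increase the largest minors, so the top i eigenvalues of B have product of norm at most
   sigma_1 ... sigma_i (A) = S.
   Lower bound: up to a unit, char B = det (X W - A) with W = U^-1 V^-1 = 1 mod m_F.
   Expanding row by row, the coefficient of X^(n-i) is a sum of determinants with i rows
   taken from -A and the others from W; replacing W by 1 changes it by at most theta * S
   with theta < 1.  The gap |lambda_i| > |lambda_(i+1)| makes the corresponding coefficient
   of char A, an elementary symmetric function of the lambdas, have norm exactly S.  Hence
   the coefficient of char B has norm S, and it is bounded by the product of the i largest
   eigenvalues of B. *)

(** * Determinant identities *)

Lemma det_mulmx_colsub (T : comPzRingType) k n (P : 'M[T]_(k, n)) (Q : 'M[T]_(n, k)) :
  \det (P *m Q) = \sum_(h : {ffun 'I_k -> 'I_n}) \det (colsub h P) * \prod_b Q (h b) b.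
Proof.
rewrite /determinant.
under eq_bigr => s _.
  under eq_bigr => a _ do rewrite mxE.
  rewrite bigA_distr_bigA /=.
  rewrite (reindex (fun h : {ffun 'I_k -> 'I_n} => [ffun a => h (s a)])) /=; last first.
    exists (fun h : {ffun 'I_k -> 'I_n} => [ffun b => h ((s^-1)%g b)]) => h _.
      by apply/ffunP => b; rewrite !ffunE permKV.
    by apply/ffunP => b; rewrite !ffunE permK.
  under eq_bigr => h _.
    rewrite big_split /=.
    under eq_bigr => a _ do rewrite ffunE.
    under [X in _ * X]eq_bigr => a _ do rewrite ffunE.
    rewrite [X in _ * X](reindex_inj (@perm_inj _ s^-1)%g) /=.
    under [X in _ * X]eq_bigr => a _ do rewrite permKV.
    over.
  rewrite mulr_sumr; over.
rewrite exchange_big /=; apply: eq_bigr => h _.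
rewrite mulr_suml; apply: eq_bigr => s _.
by rewrite mulrA; congr (_ * _ * _); apply: eq_bigr => a _; rewrite mxE.
Qed.

Definition mixmx (T : Type) n (S : {set 'I_n}) (A W : 'M[T]_n) : 'M[T]_n :=
  \matrix_(a, b) if a \in S then A a b else W a b.

Lemma mixmxT (T : Type) n (A W : 'M[T]_n) : mixmx setT A W = A.
Proof. by apply/matrixP => a b; rewrite mxE in_setT. Qed.

Lemma row'_col'_mixmx (T : Type) n (S : {set 'I_n.+1}) (A W : 'M[T]_n.+1) r j :
  row' r (col' j (mixmx S A W)) =
  mixmx [set a | lift r a \in S] (row' r (col' j A)) (row' r (col' j W)).
Proof. by apply/matrixP => a b; rewrite !mxE inE. Qed.

Lemma card_lift_preimage n (S : {set 'I_n.+1}) r : r \notin S ->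
  #|[set a | lift r a \in S]| = #|S|.
Proof.
move=> rS; rewrite -(card_imset _ (@lift_inj _ r)); apply: eq_card => x.
apply/imsetP/idP => [[a]|xS]; first by rewrite inE => aS ->.
by case: (unliftP r x) xS => [y -> yS|-> xS]; [exists y; rewrite ?inE | rewrite xS in rS].
Qed.

Definition pencil_mx (T : comNzRingType) n (W A : 'M[T]_n) : 'M[{poly T}]_n :=
  'X *: map_mx polyC W - map_mx polyC A.

Lemma det_pencil_mx (T : comNzRingType) n (W A : 'M[T]_n) :
  \det (pencil_mx W A) = \sum_(S : {set 'I_n}) 'X^(n - #|S|) * (\det (mixmx S (- A) W))%:P.
Proof.
have XnS (S : {set 'I_n}) (c d : 'I_n -> T) :
    \prod_a (if a \in S then (c a)%:P else 'X * (d a)%:P) =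
    'X^(n - #|S|) * (\prod_a (if a \in S then c a else d a))%:P.
  rewrite (eq_bigr (fun a => (if a \in ~: S then 'X else 1) *
                             (if a \in S then c a else d a)%:P)); last first.
    by move=> a _; rewrite in_setC; case: (a \in S); rewrite /= ?mul1r.
  by rewrite big_split /= rmorph_prod -big_mkcond prodr_const cardsCs setCK card_ord.
rewrite /determinant; symmetry.
under eq_bigr => S _ do rewrite rmorph_sum mulr_sumr.
rewrite exchange_big /=; apply: eq_bigr => s _.
rewrite (eq_bigr (fun a => (- A a (s a))%:P + 'X * (W a (s a))%:P)); last first.
  by move=> a _; rewrite !mxE polyCN addrC.
rewrite bigA_distr mulr_sumr; apply: eq_bigr => S _.
rewrite XnS rmorphM /= rmorph_sign mulrCA; congr (_ * (_ * _%:P)).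
by apply: eq_bigr => a _; rewrite !mxE.
Qed.

Lemma coef_det_pencil_mx (T : comNzRingType) n (W A : 'M[T]_n) k : (k <= n)%N ->
  (\det (pencil_mx W A))`_(n - k) = \sum_(S : {set 'I_n} | #|S| == k) \det (mixmx S (- A) W).
Proof.
move=> le_kn; rewrite det_pencil_mx coef_sum [RHS]big_mkcond; apply: eq_bigr => S _.
have le_Sn : (#|S| <= n)%N by rewrite -[n in (_ <= n)%N]card_ord max_card.
rewrite coefXnM coefC; have [->|neq_Sk] := eqVneq #|S| k; first by rewrite ltnn subnn.
by case: ltnP => // ?; case: eqP => // ?; case/eqP: neq_Sk; lia.
Qed.

Lemma char_poly_pencil (T : comNzRingType) n (A : 'M[T]_n) :
  char_poly A = \det (pencil_mx 1%:M A).
Proof. by rewrite /char_poly /char_poly_mx /pencil_mx map_mx1 scalemx1. Qed.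

Lemma char_poly_mulmx (F : fieldType) n (U A V : 'M[F]_n) :
  U \in unitmx -> V \in unitmx ->
  char_poly (U *m A *m V) = (\det U * \det V)%:P * \det (pencil_mx (invmx U *m invmx V) A).
Proof.
move=> Uu Vu; rewrite /char_poly; have -> : char_poly_mx (U *m A *m V) =
    map_mx polyC U *m pencil_mx (invmx U *m invmx V) A *m map_mx polyC V.
  rewrite /pencil_mx mulmxBr mulmxBl -!map_mxM -scalemxAr -scalemxAl -!map_mxM.
  by rewrite !mulmxA mulmxV // mul1mx mulVmx // map_mx1 scalemx1.
by rewrite !det_mulmx !det_map_mx rmorphM /= mulrAC mulrC.
Qed.

Lemma char_poly_conjmx (F : fieldType) n (K B : 'M[F]_n) : K \in unitmx ->
  char_poly (K *m B *m invmx K) = char_poly B.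
Proof.
move=> Ku; rewrite char_poly_mulmx ?unitmx_inv // invmxK mulVmx // char_poly_pencil.
by rewrite -det_mulmx mulmxV // det1 mul1r.
Qed.

Lemma size_char_poly_roots (F : fieldType) n (A : 'M[F]_n) (s : seq F) :
  char_poly A = \prod_(x <- s) ('X - x%:P) -> size s = n.
Proof. by move=> charA; have := size_char_poly A; rewrite charA size_prod_XsubC => -[]. Qed.

Section Deflation.
Variables (T : comNzRingType) (n : nat) (C : 'M[T]_n.+1) (r : 'I_n.+1) (mu : T).
Hypothesis rowC : forall b, C r b = mu * (r == b)%:R.

Lemma char_poly_deflate :
  char_poly C = ('X - mu%:P) * char_poly (row' r (col' r C)).
Proof.
rewrite /char_poly (expand_det_row _ r) (bigD1 r) //= big1 ?addr0.
  rewrite /cofactor row'_col'_char_poly_mx -signr_odd oddD addbb mul1r.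
  by rewrite !mxE rowC eqxx mulr1 mulr1n.
by move=> b rb; rewrite !mxE rowC eq_sym (negbTE rb) mulr0 mulr0n subrr mul0r.
Qed.

Lemma det_mxsub_deflate k (f g : 'I_k -> 'I_n) :
  exists f' g' : 'I_k.+1 -> 'I_n.+1,
    \det (mxsub f' g' C) = mu * \det (mxsub f g (row' r (col' r C))).
Proof.
pose ext (h : 'I_k -> 'I_n) a := if unlift ord0 a is Some b then lift r (h b) else r.
exists (ext f), (ext g).
rewrite (expand_det_row _ ord0) (bigD1 ord0) //= big1 ?addr0.
  rewrite mxE /ext unlift_none rowC eqxx mulr1 /cofactor add0n expr0 mul1r.
  by congr (_ * \det _); apply/matrixP => a b; rewrite !mxE !liftK.
move=> b b0; rewrite mxE /ext unlift_none rowC.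
by case: unliftP b0 => [b' -> _|-> /eqP //]; rewrite (negbTE (neq_lift _ _)) mulr0 mul0r.
Qed.

End Deflation.

(** * Ultrametric absolute values and integral matrices *)

Section UltrametricAbsoluteValue.
Variables (R : realType) (L : fieldType) (v : L -> R).
Hypothesis hv : nonarch_abs v.

Lemma absv_ge0 x : 0 <= v x. Proof. by case: hv. Qed.

Lemma absv_eq0 x : (v x == 0) = (x == 0).
Proof. by case: hv => _ v_eq0 _ _; apply/eqP/eqP => /v_eq0. Qed.

Lemma absv0 : v 0 = 0. Proof. by apply/eqP; rewrite absv_eq0. Qed.

Lemma absvM x y : v (x * y) = v x * v y. Proof. by case: hv. Qed.

Lemma absv1 : v 1 = 1.
Proof.
apply: (@mulfI _ (v 1)); first by rewrite absv_eq0 oner_neq0.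
by rewrite -absvM !mulr1.
Qed.

Lemma absvN1 : v (-1) = 1.
Proof.
by apply/eqP; rewrite -(@pexpr_eq1 _ _ 2) ?absv_ge0 // expr2 -absvM mulrNN mulr1 absv1.
Qed.

Lemma absvN x : v (- x) = v x.
Proof. by rewrite -mulN1r absvM absvN1 mul1r. Qed.

Lemma absv_sign k : v ((-1) ^+ k) = 1.
Proof. by elim: k => [|k IHk]; rewrite ?absv1 // exprS absvM absvN1 IHk mul1r. Qed.

Lemma absvV x : v x^-1 = (v x)^-1.
Proof.
have [->|x0] := eqVneq x 0; first by rewrite invr0 absv0 invr0.
have vx0 : v x != 0 by rewrite absv_eq0.
by rewrite -[LHS]mul1r -(mulVf vx0) -mulrA -absvM mulfV // absv1 mulr1.
Qed.

Lemma absvD x y : v (x + y) <= Num.max (v x) (v y). Proof. by case: hv. Qed.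

Lemma absvB x y : v (x - y) <= Num.max (v x) (v y).
Proof. by rewrite -(absvN y) absvD. Qed.

Lemma absvD_dominant x y : v y < v x -> v (x + y) = v x.
Proof.
move=> lt_yx; apply/le_anti/andP; split.
  by rewrite (le_trans (absvD x y)) // ge_max lexx ltW.
have := absvB (x + y) y; rewrite addrK le_max => /orP[//|le_x_y].
by have := lt_le_trans lt_yx le_x_y; rewrite ltxx.
Qed.

Lemma absv_sum_le (I : Type) (r : seq I) (P : pred I) (F : I -> L) (c : R) :
  0 <= c -> (forall i, P i -> v (F i) <= c) -> v (\sum_(i <- r | P i) F i) <= c.
Proof.
move=> c0 leFc; apply: (big_ind (fun x => v x <= c)) => [|x y hx hy|//].
  by rewrite absv0.
by rewrite (le_trans (absvD x y)) // ge_max hx.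
Qed.

Lemma absv_sum_lt (I : Type) (r : seq I) (P : pred I) (F : I -> L) (c : R) :
  0 < c -> (forall i, P i -> v (F i) < c) -> v (\sum_(i <- r | P i) F i) < c.
Proof.
move=> c0 ltFc; apply: (big_ind (fun x => v x < c)) => [|x y hx hy|//].
  by rewrite absv0.
by rewrite (le_lt_trans (absvD x y)) // gt_max hx.
Qed.

Lemma absv_prod (I : Type) (r : seq I) (P : pred I) (F : I -> L) :
  v (\prod_(i <- r | P i) F i) = \prod_(i <- r | P i) v (F i).
Proof. exact: (big_morph v absvM absv1). Qed.

Lemma absv_prod_le1 (I : Type) (r : seq I) (P : pred I) (F : I -> L) :
  (forall i, P i -> v (F i) <= 1) -> v (\prod_(i <- r | P i) F i) <= 1.
Proof.
move=> le1; rewrite absv_prod; apply: prodr_ile1 => i Pi.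
by rewrite absv_ge0 le1.
Qed.

Definition integral_mx m n (M : 'M[L]_(m, n)) := forall a b, v (M a b) <= 1.

(* [M = 1 mod m_F]; that the entries lie in F plays no role in the argument. *)
Definition cong1_mx n (M : 'M[L]_n) := forall a b, v ((M - 1%:M) a b) < 1.

Lemma integral_mx1 n : integral_mx (1%:M : 'M[L]_n).
Proof. by move=> a b; rewrite mxE; case: (a == b); rewrite ?absv1 ?absv0. Qed.

Lemma absv_mulmx_lt m n p (P : 'M[L]_(m, n)) (Q : 'M[L]_(n, p)) (c : R) :
  0 < c -> integral_mx P -> (forall a b, v (Q a b) < c) ->
  forall a b, v ((P *m Q) a b) < c.
Proof.
move=> c0 intP ltQc a b; rewrite mxE; apply: absv_sum_lt => // d _.
by rewrite absvM (le_lt_trans _ (ltQc d b)) // ler_piMl ?absv_ge0.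
Qed.

Lemma absv_det_integral n (W : 'M[L]_n) : integral_mx W -> v (\det W) <= 1.
Proof.
move=> intW; apply: absv_sum_le => // s _.
by rewrite absvM absv_sign mul1r; apply: absv_prod_le1.
Qed.

Lemma unitmx_absv_det n (W : 'M[L]_n) : v (\det W) = 1 -> W \in unitmx.
Proof. by move=> detW; rewrite unitmxE unitfE -absv_eq0 detW oner_neq0. Qed.

Lemma integral_invmx n (W : 'M[L]_n) :
  integral_mx W -> v (\det W) = 1 -> integral_mx (invmx W).
Proof.
move=> intW detW a b; rewrite /invmx unitmx_absv_det // !mxE absvM absvV detW invr1.
rewrite mul1r /cofactor absvM absv_sign mul1r.
by apply: absv_det_integral => c d; rewrite !mxE.
Qed.

Lemma cong1_of_cong_id_mod_m (F : {pred L}) n (M : 'M[L]_n) :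
  cong_id_mod_m v F M -> cong1_mx M.
Proof. by move=> congM a b; have := congM a b; rewrite !mxE inE => /andP[]. Qed.

Lemma cong1_integral n (M : 'M[L]_n) : cong1_mx M -> integral_mx M.
Proof.
move=> cM a b; rewrite -[M](subrK 1%:M) mxE (le_trans (absvD _ _)) //.
by rewrite ge_max (ltW (cM a b)) integral_mx1.
Qed.

Lemma cong1_mulmx n (P Q : 'M[L]_n) : cong1_mx P -> cong1_mx Q -> cong1_mx (P *m Q).
Proof.
move=> cP cQ a b; have -> : P *m Q - 1%:M = P *m (Q - 1%:M) + (P - 1%:M).
  by rewrite mulmxBr mulmx1 addrA subrK.
rewrite mxE (le_lt_trans (absvD _ _)) // gt_max cP andbT.
by apply: absv_mulmx_lt => //; apply: cong1_integral.
Qed.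

Lemma cong1_invmx n (M : 'M[L]_n) :
  v (\det M) = 1 -> cong1_mx M -> cong1_mx (invmx M).
Proof.
move=> detM cM a b; have -> : invmx M - 1%:M = - (invmx M *m (M - 1%:M)).
  by rewrite mulmxBr mulVmx ?unitmx_absv_det // mulmx1 opprB.
rewrite mxE absvN; apply: absv_mulmx_lt => //.
by apply: integral_invmx => //; apply: cong1_integral.
Qed.

Lemma cong1_bound n (M : 'M[L]_n) : cong1_mx M ->
  exists th : R, [/\ 0 <= th, th < 1 & forall a b, v ((M - 1%:M) a b) <= th].
Proof.
move=> cM; exists (\big[Num.max/0]_(p : 'I_n * 'I_n) v ((M - 1%:M) p.1 p.2)).
split; first exact: bigmax_ge_id.
  by apply: bigmax_lt => // p _; apply: cM.
by move=> a b; exact: (le_bigmax _ (fun p : 'I_n * 'I_n => v ((M - 1%:M) p.1 p.2)) (a, b)).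
Qed.

(** * Largest minors *)

Lemma le_sv_prod n (A : 'M[L]_n) k (f g : 'I_k -> 'I_n) :
  v (\det (mxsub f g A)) <= sv_prod v A k.
Proof.
rewrite -mxsub_ffun.
pose G (f' g' : {ffun 'I_k -> 'I_n}) := v (\det (mxsub f' g' A)).
apply: le_trans (le_bigmax 0 (G (finfun f)) (finfun g)) _.
exact: (le_bigmax 0 (fun f' => \big[Num.max/0]_g' G f' g') (finfun f)).
Qed.

Lemma sv_prod_le n (A : 'M[L]_n) k (c : R) : 0 <= c ->
  (forall f g : 'I_k -> 'I_n, v (\det (mxsub f g A)) <= c) -> sv_prod v A k <= c.
Proof. by move=> c0 le_c; do 2![apply: bigmax_le => // ? _]. Qed.

Lemma sv_prod_ge0 n (A : 'M[L]_n) k : 0 <= sv_prod v A k.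
Proof. exact: bigmax_ge_id. Qed.

Lemma sv_prod0_ge1 n (A : 'M[L]_n) : 1 <= sv_prod v A 0.
Proof.
by have := le_sv_prod A (ffun0 (card_ord 0)) (ffun0 (card_ord 0)); rewrite det_mx00 absv1.
Qed.

Lemma sv_prod_row'_col' n (A : 'M[L]_n.+1) r j k :
  sv_prod v (row' r (col' j A)) k <= sv_prod v A k.
Proof.
apply: sv_prod_le => [|f g]; first exact: sv_prod_ge0.
by rewrite (_ : mxsub f g _ = mxsub (lift r \o f) (lift j \o g) A) ?le_sv_prod //;
  apply/matrixP => a b; rewrite !mxE.
Qed.

Lemma sv_prodN n (A : 'M[L]_n) k : sv_prod v (- A) k = sv_prod v A k.
Proof.
apply: eq_bigr => f _; apply: eq_bigr => g _.
have -> : mxsub f g (- A) = - mxsub f g A by apply/matrixP => a b; rewrite !mxE.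
by rewrite -scaleN1r detZ absvM absv_sign mul1r.
Qed.

Lemma absv_det_mulmx_le k n (P : 'M[L]_(k, n)) (Q : 'M[L]_(n, k)) (c : R) :
  0 <= c -> integral_mx Q -> (forall h : 'I_k -> 'I_n, v (\det (colsub h P)) <= c) ->
  v (\det (P *m Q)) <= c.
Proof.
move=> c0 intQ le_c; rewrite det_mulmx_colsub; apply: absv_sum_le => // h _.
by rewrite absvM -[c]mulr1 ler_pM ?absv_ge0 ?absv_prod_le1.
Qed.

Lemma sv_prod_mulmx n (P B Q : 'M[L]_n) k :
  integral_mx P -> integral_mx Q -> sv_prod v (P *m B *m Q) k <= sv_prod v B k.
Proof.
move=> intP intQ; apply: sv_prod_le => [|f g]; first exact: sv_prod_ge0.
rewrite mxsub_mul; apply: absv_det_mulmx_le => [||h]; first exact: sv_prod_ge0.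
  by move=> a b; rewrite mxE.
rewrite -mxsubcr mxsub_mul -det_tr trmx_mul.
apply: absv_det_mulmx_le => [||h']; first exact: sv_prod_ge0.
  by move=> a b; rewrite !mxE.
by rewrite -trmx_mxsub det_tr -mxsubrc le_sv_prod.
Qed.

Lemma absv_det_mixmx_le n (S : {set 'I_n}) (A W : 'M[L]_n) :
  integral_mx W -> v (\det (mixmx S A W)) <= sv_prod v A #|S|.
Proof.
elim: n S A W => [|n IHn] S A W intW; have [->|] := eqVneq S setT;
  try by rewrite mixmxT cardsT card_ord -{1}[A]mxsub_id le_sv_prod.
  by rewrite -properT => /properP[_ [[]]].
rewrite -properT => /properP[_ [r _ rS]].
rewrite (expand_det_row _ r); apply: absv_sum_le => [|b _]; first exact: sv_prod_ge0.
rewrite mxE (negbTE rS) /cofactor row'_col'_mixmx !absvM absv_sign mul1r.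
rewrite -[X in _ <= X]mul1r ler_pM ?absv_ge0 //.
rewrite -(card_lift_preimage rS) (le_trans (IHn _ _ _ _)) ?sv_prod_row'_col' //.
by move=> a c; rewrite !mxE.
Qed.

Lemma absv_det_mixmx_sub_le n (S : {set 'I_n}) (A W W0 : 'M[L]_n) (th : R) :
  0 <= th -> integral_mx W -> integral_mx W0 -> (forall a b, v (W a b - W0 a b) <= th) ->
  v (\det (mixmx S A W) - \det (mixmx S A W0)) <= th * sv_prod v A #|S|.
Proof.
move=> th0; elim: n S A W W0 => [|n IHn] S A W W0 intW intW0 leWth;
  have [->|] := eqVneq S setT;
  try by rewrite !mixmxT subrr absv0 mulr_ge0 ?sv_prod_ge0.
  by rewrite -properT => /properP[_ [[]]].
rewrite -properT => /properP[_ [r _ rS]].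
rewrite (expand_det_row _ r) (expand_det_row (mixmx S A W0) r) -sumrB.
apply: absv_sum_le => [|b _]; first by rewrite mulr_ge0 ?sv_prod_ge0.
rewrite !mxE (negbTE rS) /cofactor !row'_col'_mixmx -(card_lift_preimage rS).
set S' := [set a | lift r a \in S]; set A' := row' r (col' b A).
set d := \det (mixmx S' A' _); set d0 := \det (mixmx S' A' _).
have intW' : integral_mx (row' r (col' b W)) by move=> a c; rewrite !mxE.
have intW0' : integral_mx (row' r (col' b W0)) by move=> a c; rewrite !mxE.
have le_d : v d <= sv_prod v A #|S'|.
  exact: le_trans (absv_det_mixmx_le _ _ intW') (sv_prod_row'_col' _ _ _ _).
have le_dd0 : v (d - d0) <= th * sv_prod v A #|S'|.
  apply: le_trans (IHn _ _ _ _ intW' intW0' _) _; first by move=> a c; rewrite !mxE.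
  by rewrite ler_wpM2l ?sv_prod_row'_col'.
have -> : W r b * ((-1) ^+ (r + b) * d) - W0 r b * ((-1) ^+ (r + b) * d0) =
          (-1) ^+ (r + b) * ((W r b - W0 r b) * d + W0 r b * (d - d0)) by ring.
rewrite absvM absv_sign mul1r (le_trans (absvD _ _)) // ge_max !absvM.
by rewrite ler_pM ?absv_ge0 //= -[X in _ <= X]mul1r ler_pM ?absv_ge0.
Qed.

Lemma absv_coef_pencil_sub_le n (W A : 'M[L]_n) (th : R) k :
  0 <= th -> integral_mx W -> (forall a b, v ((W - 1%:M) a b) <= th) -> (k <= n)%N ->
  v ((\det (pencil_mx W A))`_(n - k) - (char_poly A)`_(n - k)) <= th * sv_prod v A k.
Proof.
move=> th0 intW leWth le_kn; rewrite char_poly_pencil !coef_det_pencil_mx // -sumrB.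
apply: absv_sum_le => [|S /eqP <-]; first by rewrite mulr_ge0 ?sv_prod_ge0.
rewrite -sv_prodN; apply: absv_det_mixmx_sub_le => //; first exact: integral_mx1.
by move=> a b; have := leWth a b; rewrite !mxE.
Qed.

Lemma integral_completion n (y : 'rV[L]_n.+1) j : y 0 j = 1 -> integral_mx y ->
  exists K : 'M[L]_n.+1, [/\ integral_mx K, v (\det K) = 1 & row ord_max K = y].
Proof.
move=> yj1 inty; set z := xcol j ord_max y.
pose K0 : 'M[L]_n.+1 := \matrix_(a, b) if a == ord_max then z 0 b else (a == b)%:R.
have intK0 : integral_mx K0.
  move=> a b; rewrite mxE; case: eqP => _; first by rewrite mxE inty.
  by have := integral_mx1 a b; rewrite mxE.
exists (xcol j ord_max K0); split.
- by move=> a b; rewrite mxE intK0.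
- rewrite xcolE det_mulmx det_perm absvM absv_sign mulr1 det_trig; last first.
    apply/is_trig_mxP => a b lt_ab; rewrite mxE.
    have -> : (a == ord_max) = false.
      by apply/negbTE; rewrite -val_eqE /= neq_ltn (leq_trans lt_ab) // -ltnS.
    by rewrite (_ : (a == b) = false) //; apply/negbTE; rewrite -val_eqE /= neq_ltn lt_ab.
  rewrite (bigD1 ord_max) //= big1 => [|a /negbTE a_max]; last by rewrite mxE a_max eqxx.
  by rewrite !mxE eqxx tpermR yj1 mulr1 absv1.
- by apply/rowP => b; rewrite !mxE eqxx tpermK.
Qed.

Lemma integral_eigenrow n (B : 'M[L]_n.+1) mu : eigenvalue B mu ->
  exists (y : 'rV[L]_n.+1) j, [/\ y 0 j = 1, integral_mx y & y *m B = mu *: y].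
Proof.
case/eigenvalueP => x xB x0.
case: (@arg_maxP _ _ _ ord0 predT (fun l => v (x 0 l))) => // j _ jmax.
have xj0 : 0 < v (x 0 j).
  rewrite lt_def absv_ge0 andbT; apply: contra x0 => /eqP xj0; apply/eqP/rowP => l.
  by apply/eqP; rewrite mxE -absv_eq0 eq_le absv_ge0 andbT -xj0; apply: jmax.
exists ((x 0 j)^-1 *: x), j; split.
- by rewrite mxE mulVf // -absv_eq0 gt_eqF.
- by move=> a l; rewrite ord1 mxE absvM absvV mulrC ler_pdivrMr ?mul1r //; apply: jmax.
- by rewrite -scalemxAl xB !scalerA mulrC.
Qed.

Lemma sv_prod_deflate n (C : 'M[L]_n.+1) r mu k :
  (forall b, C r b = mu * (r == b)%:R) ->
  v mu * sv_prod v (row' r (col' r C)) k <= sv_prod v C k.+1.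
Proof.
move=> rowC; have [->|mu0] := eqVneq (v mu) 0; first by rewrite mul0r sv_prod_ge0.
have vmu : 0 < v mu by rewrite lt_def mu0 absv_ge0.
rewrite mulrC -ler_pdivlMr //; apply: sv_prod_le => [|f g].
  by rewrite divr_ge0 ?sv_prod_ge0 ?absv_ge0.
rewrite ler_pdivlMr // mulrC -absvM.
by have [f' [g' <-]] := det_mxsub_deflate rowC f g; apply: le_sv_prod.
Qed.

Lemma absv_prod_eigen_le n (B : 'M[L]_n) (t : seq L) k :
  char_poly B = \prod_(x <- t) ('X - x%:P) -> (k <= n)%N ->
  v (\prod_(x <- take k t) x) <= sv_prod v B k.
Proof.
elim: n B t k => [|n IHn] B t [|k] charB le_kn //;
  try by rewrite take0 big_nil absv1 sv_prod0_ge1.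
case: t charB => [|mu t] charB.
  by move: (size_char_poly B); rewrite charB big_nil size_poly1.
have : eigenvalue B mu by rewrite eigenvalue_root_char charB root_prod_XsubC mem_head.
case/integral_eigenrow => y [j [yj1 inty yB]].
have [K [intK detK rowK]] := integral_completion yj1 inty.
have Ku := unitmx_absv_det detK.
pose C := K *m B *m invmx K.
have rowC b : C ord_max b = mu * (ord_max == b)%:R.
  have : row ord_max C = mu *: row ord_max 1%:M.
    by rewrite !row_mul rowK yB -scalemxAl -rowK -row_mul mulmxV.
  by move/rowP/(_ b); rewrite !mxE.
have charC' : char_poly (row' ord_max (col' ord_max C)) = \prod_(x <- t) ('X - x%:P).
  apply: (mulfI (monic_neq0 (monicXsubC mu))).
  by rewrite -char_poly_deflate // char_poly_conjmx // charB big_cons.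
apply: le_trans (sv_prod_mulmx B k.+1 intK (integral_invmx intK detK)).
rewrite /= big_cons absvM (le_trans _ (sv_prod_deflate k rowC)) //.
by rewrite ler_wpM2l ?absv_ge0 ?IHn.
Qed.

(** * Elementary symmetric functions of sorted roots *)

Definition ord_prefix n i : {set 'I_n} := [set a : 'I_n | (a < i)%N].

Lemma card_ord_prefix n i : (i <= n)%N -> #|ord_prefix n i| = i.
Proof.
move=> le_in; rewrite -sum1_card (eq_bigl (fun a : 'I_n => (a < i)%N)) => [|a]; last first.
  by rewrite inE.
by rewrite -(big_ord_widen _ (fun=> 1%N)) // sum1_card card_ord.
Qed.

Lemma prod_ord_prefix (s : seq L) i : (i <= size s)%N ->
  \prod_(a in ord_prefix (size s) i) s`_a = \prod_(x <- take i s) x.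
Proof.
move=> le_is; rewrite (eq_bigl (fun a : 'I_(size s) => (a < i)%N)) => [|a]; last by rewrite inE.
rewrite -(big_ord_widen _ (fun a => s`_a)) // (big_nth 0) size_takel // big_mkord.
by apply: eq_bigr => a _; rewrite nth_take.
Qed.

Section SortedByAbsoluteValue.
Variables (s : seq L) (i : nat).
Hypotheses (s_sorted : sorted (fun x y => v y <= v x) s) (i_gt0 : (0 < i)%N)
  (i_lt : (i < size s)%N).
Let J := ord_prefix (size s) i.

Lemma absv_nth_sorted a b : (a <= b)%N -> (b < size s)%N -> v s`_b <= v s`_a.
Proof.
have ge_trans : transitive (fun x y => v y <= v x).
  by move=> y x z le_yx le_zy; apply: le_trans le_zy le_yx.
move=> le_ab lt_bs; apply: (sorted_leq_nth ge_trans (fun x => lexx (v x)) 0 s_sorted);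
  by rewrite ?inE // (leq_ltn_trans le_ab).
Qed.

Lemma prod_absv_outside_prefix (I : {set 'I_(size s)}) :
  \prod_(a in I :\: J) v s`_a <= v s`_i ^+ #|I :\: J|.
Proof.
rewrite -prodr_const; apply: ler_prod => a; rewrite !inE -leqNgt => /andP[le_ia _].
by rewrite absv_ge0 absv_nth_sorted.
Qed.

Lemma prod_absv_inside_prefix (I : {set 'I_(size s)}) :
  v s`_i.-1 ^+ #|J :\: I| <= \prod_(a in J :\: I) v s`_a.
Proof.
rewrite -prodr_const; apply: ler_prod => a; rewrite !inE => /andP[_ lt_ai].
rewrite absv_ge0 absv_nth_sorted // ?(leq_ltn_trans (leq_pred i)) //.
by rewrite -ltnS prednK.
Qed.

Lemma card_setD_prefix (I : {set 'I_(size s)}) : #|I| = i -> #|I :\: J| = #|J :\: I|.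
Proof. by move=> cardI; rewrite !cardsD cardI (card_ord_prefix (ltnW i_lt)) // setIC. Qed.

Lemma absv_prefix_gt0 a : v s`_i < v s`_i.-1 -> (a < i)%N -> 0 < v s`_a.
Proof.
move=> gap lt_ai; apply: lt_le_trans (le_lt_trans (absv_ge0 _) gap) _.
by rewrite absv_nth_sorted ?(leq_ltn_trans (leq_pred i)) // -ltnS prednK.
Qed.

Lemma prod_absv_le_prefix (I : {set 'I_(size s)}) : #|I| = i ->
  \prod_(a in I) v s`_a <= \prod_(a in J) v s`_a.
Proof.
move=> cardI; rewrite (big_setID J) [X in _ <= X](big_setID I) setIC /=.
apply: ler_wpM2l; first by apply: prodr_ge0 => a _; apply: absv_ge0.
apply: le_trans (prod_absv_outside_prefix I) (le_trans _ (prod_absv_inside_prefix I)).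
by rewrite card_setD_prefix // lerXn2r ?nnegrE ?absv_ge0 // absv_nth_sorted // leq_pred.
Qed.

Lemma prod_absv_lt_prefix (I : {set 'I_(size s)}) : v s`_i < v s`_i.-1 ->
  #|I| = i -> I != J -> \prod_(a in I) v s`_a < \prod_(a in J) v s`_a.
Proof.
move=> gap cardI neq_IJ; rewrite (big_setID J) [X in _ < X](big_setID I) setIC /=.
rewrite ltr_pM2l; last first.
  apply: prodr_gt0 => a /setIP[aJ _]; apply: absv_prefix_gt0 => //.
  by rewrite inE in aJ.
apply: le_lt_trans (prod_absv_outside_prefix I) (lt_le_trans _ (prod_absv_inside_prefix I)).
rewrite card_setD_prefix // ltrXn2r ?absv_ge0 // cards_eq0 setD_eq0.
move: neq_IJ; apply: contra => sub_JI.
by rewrite eq_sym eqEcard sub_JI cardI /J (card_ord_prefix (ltnW i_lt)) leqnn.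
Qed.

Lemma absv_prod_take_gt0 : v s`_i < v s`_i.-1 -> 0 < v (\prod_(x <- take i s) x).
Proof.
move=> gap; rewrite -(prod_ord_prefix (ltnW i_lt)) // absv_prod.
by apply: prodr_gt0 => a; rewrite inE; apply: absv_prefix_gt0.
Qed.

Lemma absv_coef_prod_XsubC_le :
  v ((\prod_(x <- s) ('X - x%:P))`_(size s - i)) <= v (\prod_(x <- take i s) x).
Proof.
rewrite coef_prod_XsubC ?leq_subr // (subKn (ltnW i_lt)) // absvM absv_sign mul1r.
rewrite -(prod_ord_prefix (ltnW i_lt)) //; apply: absv_sum_le => [|I /andP[_ /eqP cardI]].
  exact: absv_ge0.
by rewrite !absv_prod prod_absv_le_prefix.
Qed.

Lemma absv_coef_prod_XsubC_eq : v s`_i < v s`_i.-1 ->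
  v ((\prod_(x <- s) ('X - x%:P))`_(size s - i)) = v (\prod_(x <- take i s) x).
Proof.
move=> gap; rewrite coef_prod_XsubC ?leq_subr // (subKn (ltnW i_lt)) // absvM absv_sign mul1r.
rewrite -(prod_ord_prefix (ltnW i_lt)) // (bigD1 J) /= ?(card_ord_prefix (ltnW i_lt)) //.
apply: absvD_dominant; apply: absv_sum_lt => [|I /andP[/eqP cardI neq_IJ]].
  by rewrite (prod_ord_prefix (ltnW i_lt)) // absv_prod_take_gt0.
by rewrite !absv_prod prod_absv_lt_prefix.
Qed.
End SortedByAbsoluteValue.
End UltrametricAbsoluteValue.

Theorem proposition4p3 (R : realType) (L : closedFieldType) (v : L -> R)
  (F : {pred L}) (n : nat) (A U V : 'M[L]_n) (i : nat) (s t : seq L) :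
  nonarch_abs v -> is_subfield F -> complete_for v F ->
  mx_over_pred F A ->
  (0 < i < n)%N ->
  sorted_eigenvalues v A s ->
  v (nth 0 s i.-1) > v (nth 0 s i) ->
  sv_prod v A i = v (\prod_(x <- take i s) x) ->
  in_GL_int v F U -> in_GL_int v F V ->
  cong_id_mod_m v F U -> cong_id_mod_m v F V ->
  sorted_eigenvalues v (U *m A *m V) t ->
  v (\prod_(x <- take i t) x) = v (\prod_(x <- take i s) x).
Proof.
move=> hv _ _ _ /andP[i_gt0 lt_in] [charA s_sorted] gap svA [_ detU] [_ detV] congU congV
  [charB t_sorted].
have [cU cV] := (cong1_of_cong_id_mod_m congU, cong1_of_cong_id_mod_m congV).
have [size_s size_t] := (size_char_poly_roots charA, size_char_poly_roots charB).
have cW := cong1_mulmx hv (cong1_invmx hv detU cU) (cong1_invmx hv detV cV).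
have [intW [th [th0 th1 leWth]]] := (cong1_integral hv cW, cong1_bound cW).
have top_gt0 : 0 < v (\prod_(x <- take i s) x) by apply: absv_prod_take_gt0; rewrite ?size_s.
have coefA : v ((char_poly A)`_(n - i)) = v (\prod_(x <- take i s) x).
  by rewrite charA -size_s absv_coef_prod_XsubC_eq ?size_s.
have coefB : v ((char_poly (U *m A *m V))`_(n - i)) = v (\prod_(x <- take i s) x).
  rewrite char_poly_mulmx ?(unitmx_absv_det hv) // coefCM !(absvM hv) detU detV !mul1r.
  rewrite -[X in v X](subrK (char_poly A)`_(n - i)) addrC (absvD_dominant hv) // coefA.
  apply: le_lt_trans (absv_coef_pencil_sub_le hv A th0 intW leWth (ltnW lt_in)) _.
  by rewrite svA gtr_pMl.
apply/le_anti/andP; split.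
  rewrite -svA (le_trans (absv_prod_eigen_le hv charB (ltnW lt_in))) //.
  by have := sv_prod_mulmx hv A i (cong1_integral hv cU) (cong1_integral hv cV).
by rewrite -coefB charB -size_t absv_coef_prod_XsubC_le ?size_t.
Qed.
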